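(* Let $\Gamma=(V,E)$ be a graph, $M_v$ ($v\in V$) monoids and $M=\Gamma_{v\in V}M_v$. Then each $M_v$ is a unitary submonoid of $M$: for $c\in M_v$ and $a\in M$, if $ac\in M_v$ then $a\in M_v$, and if $ca\in M_v$ then $a\in M_v$.
   Context: A graph $\Gamma=(V,E)$ has vertex set $V$ and irreflexive symmetric edge relation $E$. The graph product $\Gamma_{v\in V}M_v$ of pairwise disjoint monoids $M_v$ is the quotient of their free product by the congruence generated by all pairs $(mn,nm)$ with $m\in M_u$, $n\in M_v$, $(u,v)\in E$. The natural map from each $M_v$ into the graph product is injective, and $M_v$ is identified with its image. *)

(* Graph products of monoids, presented as words over the
   disjoint union of the vertex monoids modulo the congruence generated by
   the free-product relations and the graph commutation relations. *)
From Stdlib Require Import List.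
Import ListNotations.
Set Implicit Arguments.

Record monoid := Monoid {
  mcarrier :> Type;
  mop : mcarrier -> mcarrier -> mcarrier;
  mone : mcarrier;
  mopA : forall x y z, mop x (mop y z) = mop (mop x y) z;
  mop1l : forall x, mop mone x = x;
  mop1r : forall x, mop x mone = x
}.

Definition simple_graph (V : Type) (E : V -> V -> Prop) : Prop :=
  (forall u v, E u v -> E v u) /\ (forall v, ~ E v v).

Section GraphProduct.
Variables (V : Type) (E : V -> V -> Prop) (M : V -> monoid).

Definition letter := {v : V & mcarrier (M v)}.
Definition word := list letter.

Definition lt (v : V) (m : M v) : letter := existT (fun v => mcarrier (M v)) v m.

Inductive gp_equiv : word -> word -> Prop :=
| gp_refl : forall w, gp_equiv w w
| gp_sym : forall w1 w2, gp_equiv w1 w2 -> gp_equiv w2 w1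
| gp_trans : forall w1 w2 w3, gp_equiv w1 w2 -> gp_equiv w2 w3 -> gp_equiv w1 w3
| gp_cat : forall w1 w1' w2 w2', gp_equiv w1 w1' -> gp_equiv w2 w2' ->
    gp_equiv (w1 ++ w2) (w1' ++ w2')
| gp_unit : forall v, gp_equiv [lt v (mone (M v))] []
| gp_mul : forall v (m n : M v), gp_equiv [lt v m; lt v n] [lt v (mop (M v) m n)]
| gp_comm : forall u v (m : M u) (n : M v), E u v ->
    gp_equiv [lt u m; lt v n] [lt v n; lt u m].

Definition in_vertex (v : V) (w : word) : Prop :=
  exists m : M v, gp_equiv w [lt v m].

End GraphProduct.

(* Letters act from the right on reduced words: a letter of M_u slides
   leftwards past letters of vertices adjacent to u, merges with a letter of
   M_u if it meets one, and is stopped by any other letter.  Up to swapping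
   adjacent commuting letters this is an action of the graph product, and the
   reduced word it assigns to a word [a] represents [a] again.  Hence [a] lies
   in M_v iff its reduced word has at most one letter, from M_v; and acting by
   c in M_v on a reduced word gives such a word only if it already was one,
   which is right unitarity.  Reversing words turns the graph product into
   that of the opposite monoids, so left unitarity follows. *)
From Stdlib Require Import List Permutation ClassicalEpsilon Eqdep Lia.
Import ListNotations.

Definition classic_dec (P : Prop) : {P} + {~ P} := excluded_middle_informative P.

Section NormalForms.
Variables (V : Type) (E : V -> V -> Prop) (M : V -> monoid).
Hypothesis HE : simple_graph E.

Lemma adj_sym u w : E u w -> E w u.
Proof. apply (proj1 HE). Qed.

Lemma adj_neq u w : E u w -> u <> w.
Proof. intros h ->; exact (proj2 HE w h). Qed.

(* Reduced words are stored reversed: the head is the rightmost letter. *)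
Fixpoint push (u : V) (y : M u) (x : word M) : word M :=
  match x with
  | [] => [lt M u y]
  | s :: x' =>
    match s with existT _ w z =>
      match classic_dec (w = u) with
      | left e =>
        let zy := mop (M u) (eq_rect w (fun t => mcarrier (M t)) z u e) y in
        if classic_dec (zy = mone (M u)) then x' else lt M u zy :: x'
      | right _ =>
        if classic_dec (E w u) then s :: push u y x' else lt M u y :: s :: x'
      end
    end
  end.

Definition act (u : V) (y : M u) (x : word M) : word M :=
  if classic_dec (y = mone (M u)) then x else push u y x.

Inductive shuffle : word M -> word M -> Prop :=
| shuffle_refl x : shuffle x x
| shuffle_sym x y : shuffle x y -> shuffle y x
| shuffle_trans x y z : shuffle x y -> shuffle y z -> shuffle x z
| shuffle_cons s x y : shuffle x y -> shuffle (s :: x) (s :: y)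
| shuffle_swap s t x : E (projT1 s) (projT1 t) -> shuffle (s :: t :: x) (t :: s :: x).

(* [no_merge u x]: a letter of M_u pushed into [x] never meets a letter of M_u. *)
Fixpoint no_merge (u : V) (x : word M) : Prop :=
  match x with
  | [] => True
  | s :: x' => projT1 s <> u /\ (E (projT1 s) u -> no_merge u x')
  end.

Fixpoint reduced (x : word M) : Prop :=
  match x with
  | [] => True
  | s :: x' => projT2 s <> mone (M (projT1 s)) /\ no_merge (projT1 s) x' /\ reduced x'
  end.

Lemma push_same u y z x :
  push u y (lt M u z :: x) =
  if classic_dec (mop (M u) z y = mone (M u)) then x else lt M u (mop (M u) z y) :: x.
Proof.
  unfold lt at 1; cbn. destruct (classic_dec (u = u)) as [e|n].
  - rewrite (UIP_refl _ _ e). reflexivity.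
  - congruence.
Qed.

Lemma push_pass u y w z x : w <> u -> E w u ->
  push u y (lt M w z :: x) = lt M w z :: push u y x.
Proof.
  intros n h; cbn. destruct (classic_dec (w = u)); [congruence|].
  destruct (classic_dec (E w u)); [reflexivity|contradiction].
Qed.

Lemma push_block u y w z x : w <> u -> ~ E w u ->
  push u y (lt M w z :: x) = lt M u y :: lt M w z :: x.
Proof.
  intros n h; cbn. destruct (classic_dec (w = u)); [congruence|].
  destruct (classic_dec (E w u)); [contradiction|reflexivity].
Qed.

Lemma act_pass u y w z x : w <> u -> E w u ->
  act u y (lt M w z :: x) = lt M w z :: act u y x.
Proof. intros; unfold act; destruct (classic_dec _); [reflexivity|now apply push_pass]. Qed.

Lemma shuffle_Permutation x y : shuffle x y -> Permutation x y.
Proof. induction 1; eauto using Permutation, Permutation_sym. Qed.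

Lemma push_shuffle u y x x' : shuffle x x' -> shuffle (push u y x) (push u y x').
Proof.
  induction 1 as [| | |[w z] x x' Hx IH|[a p] [b q] x Hab]; eauto using shuffle.
  - fold (lt M w z). destruct (classic_dec (w = u)) as [<-|n].
    + rewrite !push_same.
      destruct (classic_dec _); eauto using shuffle.
    + destruct (classic_dec (E w u)).
      * rewrite !push_pass by assumption. now apply shuffle_cons.
      * rewrite !push_block by assumption. now apply shuffle_cons, shuffle_cons.
  - simpl in Hab. fold (lt M a p) (lt M b q). destruct (classic_dec (a = u)) as [<-|n].
    + assert (b <> a) by (intros ->; exact (adj_neq _ _ Hab eq_refl)).
      rewrite push_same, push_pass, push_same by auto using adj_sym.
      destruct (classic_dec _); eauto using shuffle.
    + destruct (classic_dec (b = u)) as [<-|n'].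
      * rewrite push_pass, !push_same by assumption.
        destruct (classic_dec _); eauto using shuffle.
      * destruct (classic_dec (E a u)) as [ha|ha], (classic_dec (E b u)) as [hb|hb].
        -- rewrite !push_pass by assumption. now apply shuffle_swap.
        -- rewrite push_pass, !push_block by assumption.
           eapply shuffle_trans; [apply shuffle_swap, ha|].
           now apply shuffle_cons, shuffle_swap.
        -- rewrite push_block, push_pass, push_block by assumption.
           eapply shuffle_trans; [|apply shuffle_sym, shuffle_swap, hb].
           now apply shuffle_cons, shuffle_swap.
        -- rewrite !push_block by assumption. now apply shuffle_cons, shuffle_swap.
Qed.

Lemma act_shuffle u y x x' : shuffle x x' -> shuffle (act u y x) (act u y x').
Proof. unfold act; destruct (classic_dec _); auto using push_shuffle. Qed.

Lemma no_merge_push w u y x : E w u -> no_merge w x -> no_merge w (push u y x).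
Proof.
  intros hwu. pose proof (adj_sym _ _ hwu) as huw. pose proof (adj_neq _ _ huw) as hn.
  induction x as [|[a z] x IH]; [simpl; auto|]. intros [h1 h2]; simpl in h1, h2.
  fold (lt M a z). destruct (classic_dec (a = u)) as [<-|n].
  - rewrite push_same. destruct (classic_dec _); simpl; auto.
  - destruct (classic_dec (E a u)).
    + rewrite push_pass by assumption. simpl; auto.
    + rewrite push_block by assumption. simpl; auto.
Qed.

Lemma reduced_push u y x : y <> mone (M u) -> reduced x -> reduced (push u y x).
Proof.
  intros hy. induction x as [|[a z] x IH]; [simpl; auto|].
  intros (h1 & h2 & h3); simpl in h1, h2. fold (lt M a z).
  destruct (classic_dec (a = u)) as [<-|n].
  - rewrite push_same. destruct (classic_dec _); simpl; auto.
  - destruct (classic_dec (E a u)).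
    + rewrite push_pass by assumption. simpl; auto using no_merge_push.
    + rewrite push_block by assumption. simpl; repeat split; auto; contradiction.
Qed.

Lemma reduced_act u y x : reduced x -> reduced (act u y x).
Proof. unfold act; destruct (classic_dec _); auto using reduced_push. Qed.

Lemma push_no_merge u y x : no_merge u x -> shuffle (push u y x) (lt M u y :: x).
Proof.
  induction x as [|[a z] x IH]; [intros; apply shuffle_refl|].
  intros [h1 h2]; simpl in h1, h2. fold (lt M a z).
  destruct (classic_dec (E a u)) as [ha|ha].
  - rewrite push_pass by assumption.
    eapply shuffle_trans; [apply shuffle_cons, IH, h2, ha|]. now apply shuffle_swap.
  - rewrite push_block by assumption. apply shuffle_refl.
Qed.

Lemma push_mul u y y' x : reduced x -> y <> mone (M u) -> y' <> mone (M u) ->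
  shuffle (push u y' (push u y x)) (act u (mop (M u) y y') x).
Proof.
  intros hr hy hy'. induction x as [|[w z] x IH]; simpl in hr.
  - simpl push at 2. rewrite push_same. unfold act.
    destruct (classic_dec _); apply shuffle_refl.
  - destruct hr as (h1 & h2 & h3). simpl in h1, h2. fold (lt M w z).
    destruct (classic_dec (w = u)) as [<-|n].
    + rewrite push_same. unfold act.
      destruct (classic_dec (mop _ z y = _)) as [e1|e1],
        (classic_dec (mop _ y y' = _)) as [e2|e2].
      * assert (z = y') as ->.
        { rewrite <- (mop1r _ z), <- e2, mopA, e1, mop1l. reflexivity. }
        now apply push_no_merge.
      * rewrite push_same, mopA, e1, mop1l.
        destruct (classic_dec _); [contradiction|]. now apply push_no_merge.
      * rewrite push_same, <- mopA, e2, mop1r.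
        destruct (classic_dec _); [contradiction|]. apply shuffle_refl.
      * rewrite !push_same, mopA. apply shuffle_refl.
    + destruct (classic_dec (E w u)).
      * rewrite !push_pass, act_pass by assumption. apply shuffle_cons, IH, h3.
      * rewrite push_block, push_same by assumption. unfold act.
        destruct (classic_dec _); [apply shuffle_refl|].
        rewrite push_block by assumption. apply shuffle_refl.
Qed.

Lemma act_mul u y y' x : reduced x ->
  shuffle (act u y' (act u y x)) (act u (mop (M u) y y') x).
Proof.
  intros hr. unfold act at 2. destruct (classic_dec (y = _)) as [->|hy].
  - rewrite mop1l. apply shuffle_refl.
  - unfold act at 1. destruct (classic_dec (y' = _)) as [->|hy'].
    + rewrite mop1r. unfold act. destruct (classic_dec _); [contradiction|apply shuffle_refl].
    + now apply push_mul.
Qed.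

Lemma push_comm u t y y' x : E u t ->
  shuffle (push t y' (push u y x)) (push u y (push t y' x)).
Proof.
  intros hut. pose proof (adj_sym _ _ hut) as htu.
  pose proof (adj_neq _ _ hut) as nut. pose proof (adj_neq _ _ htu) as ntu.
  induction x as [|[w z] x IH].
  - simpl push at 2 4. rewrite !push_pass by assumption. now apply shuffle_swap.
  - fold (lt M w z). destruct (classic_dec (w = u)) as [<-|n].
    + rewrite push_same, push_pass, push_same by assumption.
      destruct (classic_dec _); [apply shuffle_refl|].
      rewrite push_pass by assumption. apply shuffle_refl.
    + destruct (classic_dec (w = t)) as [<-|n'].
      * rewrite (push_pass u y w z x), !push_same by assumption.
        destruct (classic_dec _); [apply shuffle_refl|].
        rewrite push_pass by assumption. apply shuffle_refl.
      * destruct (classic_dec (E w u)), (classic_dec (E w t));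
          repeat (first
            [ rewrite (push_pass u y w) by assumption
            | rewrite (push_pass t y' w) by assumption
            | rewrite (push_block u y w) by assumption
            | rewrite (push_block t y' w) by assumption
            | rewrite (push_pass u y t) by assumption
            | rewrite (push_pass t y' u) by assumption ]);
          first [apply shuffle_refl | apply shuffle_cons, IH | now apply shuffle_swap].
Qed.

Lemma act_comm u t y y' x : E u t ->
  shuffle (act t y' (act u y x)) (act u y (act t y' x)).
Proof.
  unfold act; destruct (classic_dec (y = _)), (classic_dec (y' = _));
    auto using shuffle_refl, push_comm.
Qed.

Definition act_letter (x : word M) (l : letter M) : word M := act (projT1 l) (projT2 l) x.

Definition act_word (x w : word M) : word M := fold_left act_letter w x.

Definition normal_form (w : word M) : word M := act_word [] w.

Lemma act_word_app x w1 w2 : act_word x (w1 ++ w2) = act_word (act_word x w1) w2.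
Proof. apply fold_left_app. Qed.

Lemma act_word_shuffle w :
  forall x x', shuffle x x' -> shuffle (act_word x w) (act_word x' w).
Proof. induction w as [|l w IH]; intros x x' h; [exact h|apply IH, act_shuffle, h]. Qed.

Lemma reduced_act_word w : forall x, reduced x -> reduced (act_word x w).
Proof. induction w as [|l w IH]; intros x h; [exact h|apply IH, reduced_act, h]. Qed.

Lemma act_word_gp_equiv w1 w2 : gp_equiv E w1 w2 ->
  forall x, reduced x -> shuffle (act_word x w1) (act_word x w2).
Proof.
  induction 1 as [| | |w1 w1' w2 w2' _ IH1 _ IH2| | |]; intros x hx; simpl;
    eauto using shuffle.
  - rewrite !act_word_app. eapply shuffle_trans; [apply act_word_shuffle, IH1, hx|].
    apply IH2, reduced_act_word, hx.
  - unfold act_letter, act; simpl. destruct (classic_dec _); [apply shuffle_refl|congruence].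
  - now apply act_mul.
  - now apply act_comm.
Qed.

Lemma gp_equiv_app_l (a w1 w2 : word M) :
  gp_equiv E w1 w2 -> gp_equiv E (a ++ w1) (a ++ w2).
Proof. auto using gp_cat, gp_refl. Qed.

Lemma rev_push u y x : gp_equiv E (rev (push u y x)) (rev x ++ [lt M u y]).
Proof.
  induction x as [|[w z] x IH]; [apply gp_refl|]. fold (lt M w z).
  destruct (classic_dec (w = u)) as [<-|n].
  - rewrite push_same. simpl. rewrite <- app_assoc. simpl.
    eapply gp_trans; [|apply gp_equiv_app_l, gp_sym, gp_mul].
    destruct (classic_dec _) as [->|e]; [|apply gp_refl].
    eapply gp_trans; [|apply gp_equiv_app_l, gp_sym, gp_unit].
    rewrite app_nil_r. apply gp_refl.
  - destruct (classic_dec (E w u)) as [ha|ha].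
    + rewrite push_pass by assumption. simpl.
      eapply gp_trans; [apply gp_cat; [exact IH|apply gp_refl]|].
      rewrite <- !app_assoc. apply gp_equiv_app_l, gp_comm, adj_sym, ha.
    + rewrite push_block by assumption. simpl. rewrite <- app_assoc. apply gp_refl.
Qed.

Lemma rev_act u y x : gp_equiv E (rev (act u y x)) (rev x ++ [lt M u y]).
Proof.
  unfold act. destruct (classic_dec _) as [->|]; [|apply rev_push].
  eapply gp_trans; [|apply gp_equiv_app_l, gp_sym, gp_unit].
  rewrite app_nil_r. apply gp_refl.
Qed.

Lemma rev_act_word w : forall x, gp_equiv E (rev (act_word x w)) (rev x ++ w).
Proof.
  induction w as [|[u y] w IH]; intros x; simpl.
  - rewrite app_nil_r. apply gp_refl.
  - eapply gp_trans; [apply IH|].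
    change (_ :: w) with ([lt M u y] ++ w). rewrite app_assoc.
    apply gp_cat; [apply rev_act|apply gp_refl].
Qed.

Lemma normal_form_equiv w : gp_equiv E w (rev (normal_form w)).
Proof. apply gp_sym, rev_act_word. Qed.

Lemma shuffle_normal_form w1 w2 :
  gp_equiv E w1 w2 -> shuffle (normal_form w1) (normal_form w2).
Proof. intros h; now apply act_word_gp_equiv. Qed.

Definition small_at (v : V) (x : word M) : Prop :=
  length x <= 1 /\ Forall (fun s => projT1 s = v) x.

Lemma shuffle_small_at v x y : shuffle x y -> small_at v x -> small_at v y.
Proof.
  intros h%shuffle_Permutation [hl ha]. split.
  - now rewrite <- (Permutation_length h).
  - exact (Permutation_Forall h ha).
Qed.

Lemma small_at_act v c x : small_at v x -> small_at v (act v c x).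
Proof.
  intros [hl ha]. destruct x as [|[w z] [|]]; simpl in hl; try lia.
  - unfold act. destruct (classic_dec _); split; simpl; auto.
  - inversion ha; subst. fold (lt M w z). unfold act. destruct (classic_dec _).
    + split; auto.
    + rewrite push_same. destruct (classic_dec _); split; simpl; auto.
Qed.

Lemma small_at_act_inv v c x : reduced x -> small_at v (act v c x) -> small_at v x.
Proof.
  unfold act. destruct (classic_dec _) as [|hc]; [auto|].
  destruct x as [|[w z] x]; [split; simpl; auto|].
  intros (_ & h2 & _) [hl ha]. simpl in h2. fold (lt M w z) in hl, ha.
  destruct (classic_dec (w = v)) as [<-|n].
  - rewrite push_same in hl, ha.
    destruct (classic_dec _), x as [|s [|]]; simpl in hl; try lia; split; auto.
    inversion ha as [|? ? hs]; subst. simpl in h2. now destruct h2.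
  - destruct (classic_dec (E w v)).
    + rewrite push_pass in ha by assumption. inversion ha; contradiction.
    + rewrite push_block in hl by assumption. simpl in hl. lia.
Qed.

Lemma in_vertex_normal_form v w : in_vertex E v w <-> small_at v (normal_form w).
Proof.
  split.
  - intros [m hm].
    apply (shuffle_small_at _ _ _ (shuffle_sym _ _ (shuffle_normal_form _ _ hm))).
    apply (small_at_act _ _ []). split; simpl; auto.
  - intros [hl ha]. pose proof (normal_form_equiv w) as hw.
    destruct (normal_form w) as [|[u z] [|]]; simpl in hl; try lia.
    + exists (mone (M v)). eapply gp_trans; [exact hw|apply gp_sym, gp_unit].
    + inversion ha; subst. now exists z.
Qed.

Lemma in_vertex_of_mulr v c a : in_vertex E v (a ++ [lt M v c]) -> in_vertex E v a.
Proof.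
  rewrite !in_vertex_normal_form. unfold normal_form. rewrite act_word_app.
  apply small_at_act_inv, reduced_act_word. exact I.
Qed.

End NormalForms.

Definition opposite_monoid (N : monoid) : monoid :=
  {| mcarrier := N;
     mop x y := mop N y x;
     mone := mone N;
     mopA x y z := eq_sym (mopA N z y x);
     mop1l := mop1r N;
     mop1r := mop1l N |}.

Section Reversal.
Variables (V : Type) (E : V -> V -> Prop) (M N : V -> monoid).
Hypothesis E_sym : forall u v, E u v -> E v u.
Variable f : forall v, M v -> N v.
Hypothesis f_one : forall v, f v (mone (M v)) = mone (N v).
Hypothesis f_mul : forall v m n, f v (mop (M v) m n) = mop (N v) (f v n) (f v m).

Definition map_letter (l : letter M) : letter N :=
  lt N (projT1 l) (f (projT1 l) (projT2 l)).

Lemma gp_equiv_rev_map w1 w2 : gp_equiv E w1 w2 ->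
  gp_equiv E (rev (map map_letter w1)) (rev (map map_letter w2)).
Proof.
  induction 1; simpl.
  - apply gp_refl.
  - now apply gp_sym.
  - eapply gp_trans; eassumption.
  - rewrite !map_app, !rev_app_distr. now apply gp_cat.
  - unfold map_letter; simpl. rewrite f_one. apply gp_unit.
  - unfold map_letter; simpl. rewrite f_mul. apply gp_mul.
  - unfold map_letter; simpl. now apply gp_comm, E_sym.
Qed.

Lemma in_vertex_rev_map v w :
  in_vertex E v w -> in_vertex E v (rev (map map_letter w)).
Proof. intros [m hm]. exists (f v m). exact (gp_equiv_rev_map _ _ hm). Qed.

End Reversal.

Section LeftMultiplication.
Variables (V : Type) (E : V -> V -> Prop) (M : V -> monoid).
Hypothesis HE : simple_graph E.
Local Notation Mop := (fun v => opposite_monoid (M v)).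

Lemma map_letter_to_opposite (w : word M) : map (map_letter V M Mop (fun v x => x)) w = w.
Proof. induction w as [|[u y] w IH]; [reflexivity|exact (f_equal (cons _) IH)]. Qed.

Lemma map_letter_from_opposite (w : word M) : map (map_letter V Mop M (fun v x => x)) w = w.
Proof. induction w as [|[u y] w IH]; [reflexivity|exact (f_equal (cons _) IH)]. Qed.

Lemma in_vertex_of_mull v c a : in_vertex E v ([lt M v c] ++ a) -> in_vertex E v a.
Proof.
  intros h.
  apply (in_vertex_rev_map V E M Mop (proj1 HE) (fun v x => x)) in h; [|reflexivity..].
  rewrite map_letter_to_opposite in h.
  apply (in_vertex_of_mulr V E Mop HE v c) in h.
  apply (in_vertex_rev_map V E Mop M (proj1 HE) (fun v x => x)) in h; [|reflexivity..].
  now rewrite map_letter_from_opposite, rev_involutive in h.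
Qed.

End LeftMultiplication.

Theorem corollary1p2 (V : Type) (E : V -> V -> Prop) (M : V -> monoid)
  (HE : simple_graph E) (v : V) (c : M v) (a : word M) :
  (in_vertex E v (a ++ [lt M v c]) -> in_vertex E v a) /\
  (in_vertex E v ([lt M v c] ++ a) -> in_vertex E v a).
Proof.
  split; [apply in_vertex_of_mulr | apply in_vertex_of_mull]; exact HE.
Qed.
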